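(* Let $A$ be an $n\times n$ irreducible doubly stochastic matrix ($n\ge2$). Then \[ \mu(A)\ge1-2\cdot\phi(A). \]
   Context: For nonempty $S\subseteq[n]$, $\mathbf 1_S$ is its indicator vector and $\mathbf 1'_S=\mathbf 1_S/|S|$. Define $\mu_S(A)=\frac12\|A\mathbf 1'_S-A\mathbf 1'_{\overline S}\|_1$ and $\mu(A)=\max_{S:\,1\le|S|\le n/2}\mu_S(A)$. Edge expansion: $\phi(A)=\min_{S:\,1\le|S|\le n/2}\frac1{|S|}\sum_{i\in S,j\notin S}A_{i,j}$. *)

From mathcomp Require Import all_boot all_order all_algebra.
Set Implicit Arguments. Unset Strict Implicit. Unset Printing Implicit Defensive.
Import Order.TTheory GRing.Theory Num.Theory.
Local Open Scope ring_scope.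

Section Defs.
Variables (R : realFieldType) (n : nat).

Definition doubly_stochastic (A : 'M[R]_n) : Prop :=
  (forall i j, 0 <= A i j) /\
  (forall i, \sum_j A i j = 1) /\
  (forall j, \sum_i A i j = 1).

Definition irreducible (A : 'M[R]_n) : Prop :=
  forall i j : 'I_n, connect (fun k l : 'I_n => 0 < A k l) i j.

Definition admissible (S : {set 'I_n}) : bool := (0 < #|S|)%N && (2 * #|S| <= n)%N.

(* (A 1'_S)_i = (1/|S|) sum_{j in S} A i j *)
Definition avg_col (A : 'M[R]_n) (S : {set 'I_n}) (i : 'I_n) : R :=
  (\sum_(j in S) A i j) / (#|S|%:R).

Definition muS (A : 'M[R]_n) (S : {set 'I_n}) : R :=
  2^-1 * \sum_i `| avg_col A S i - avg_col A (~: S) i |.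

(* maximum over admissible S; mu_S >= 0, so the default 0 is harmless when
   the index set is nonempty (n >= 2) *)
Definition mu (A : 'M[R]_n) : R :=
  \big[Num.max/0]_(S : {set 'I_n} | admissible S) muS A S.

Definition phiS (A : 'M[R]_n) (S : {set 'I_n}) : R :=
  (\sum_(i in S) \sum_(j in ~: S) A i j) / (#|S|%:R).

(* minimum over admissible S; the default (the maximum of the same values)
   does not affect the minimum when the index set is nonempty *)
Definition phi (A : 'M[R]_n) : R :=
  \big[Num.min/ \big[Num.max/0]_(S : {set 'I_n} | admissible S) phiS A S]_(S : {set 'I_n} | admissible S) phiS A S.

End Defs.

From mathcomp Require Import all_boot all_order all_algebra.
From mathcomp Require Import lra zify.
Set Implicit Arguments. Unset Strict Implicit. Unset Printing Implicit Defensive.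
Import Order.TTheory GRing.Theory Num.Theory.
Local Open Scope ring_scope.

(* Write k = |S| <= m = |S^c| and c for the weight of the edges leaving S.
   Double stochasticity makes the rows of S put mass k - c on the columns of
   S and the rows of S^c put mass c there (and symmetrically for S^c), so
   restricting the l1-norm defining mu_S to the rows of S and of S^c gives
   mu_S >= 1 - c (1/k + 1/m) >= 1 - 2 c / k = 1 - 2 phi_S.  Taking S to be a
   minimiser of phi_S gives the theorem. *)

Section CutWeights.
Variables (R : realFieldType) (n : nat) (A : 'M[R]_n).

Definition block_sum (S T : {set 'I_n}) : R := \sum_(i in S) \sum_(j in T) A i j.

Lemma sum_setC (S : {set 'I_n}) (F : 'I_n -> R) :
  \sum_i F i = \sum_(i in S) F i + \sum_(i in ~: S) F i.
Proof.
by rewrite (bigID (mem S)) /=; congr (_ + _); apply: eq_bigl => i; rewrite inE.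
Qed.

Lemma block_sum_setC_r (S T : {set 'I_n}) :
  (forall i, \sum_j A i j = 1) -> block_sum S T + block_sum S (~: T) = #|S|%:R.
Proof.
move=> rowA; rewrite -big_split /= -sumr_const.
by apply: eq_bigr => i _; rewrite -sum_setC rowA.
Qed.

Lemma block_sum_setC_l (S T : {set 'I_n}) :
  (forall j, \sum_i A i j = 1) -> block_sum S T + block_sum (~: S) T = #|T|%:R.
Proof.
move=> colA; rewrite /block_sum exchange_big [X in _ + X]exchange_big /=.
rewrite -big_split /= -sumr_const.
by apply: eq_bigr => j _; rewrite -sum_setC colA.
Qed.

Lemma block_sum_cut_sym (S : {set 'I_n}) :
  doubly_stochastic A -> block_sum (~: S) S = block_sum S (~: S).
Proof.
move=> [_ [rowA colA]]; apply: (addrI (block_sum S S)).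
by rewrite block_sum_setC_l // block_sum_setC_r.
Qed.

Lemma sum_avg_col (S T : {set 'I_n}) :
  \sum_(i in T) avg_col A S i = block_sum T S / #|S|%:R.
Proof. by rewrite /block_sum mulr_suml. Qed.

Lemma muS_ge_blocks (S : {set 'I_n}) :
  let k := #|S|%:R in let m := #|~: S|%:R in
  block_sum S S / k - block_sum S (~: S) / m
    + (block_sum (~: S) (~: S) / m - block_sum (~: S) S / k) <= 2 * muS A S.
Proof.
rewrite /muS mulrA divff ?pnatr_eq0 // mul1r (sum_setC S).
rewrite -!sum_avg_col -!sumrB; apply: lerD; apply: ler_sum => i _.
  exact: ler_norm.
by rewrite -normrN opprB ler_norm.
Qed.

Lemma muS_ge_cut (S : {set 'I_n}) :
  doubly_stochastic A -> (0 < #|S|)%N -> (0 < #|~: S|)%N ->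
  1 - block_sum S (~: S) * (#|S|%:R^-1 + #|~: S|%:R^-1) <= muS A S.
Proof.
move=> DS kS mS; have [_ [rowA colA]] := DS.
have k0 : #|S|%:R != 0 :> R by rewrite pnatr_eq0 -lt0n.
have m0 : #|~: S|%:R != 0 :> R by rewrite pnatr_eq0 -lt0n.
have in_S : block_sum S S = #|S|%:R - block_sum S (~: S).
  by rewrite -(block_sum_setC_r S S rowA) addrK.
have in_C : block_sum (~: S) (~: S) = #|~: S|%:R - block_sum S (~: S).
  by rewrite -(block_sum_setC_l S (~: S) colA) addrC addKr.
have := muS_ge_blocks S; rewrite /= in_S in_C block_sum_cut_sym //.
rewrite !mulrBl !divff // mulrDr; lra.
Qed.

Lemma muS_ge_one_sub_phiS (S : {set 'I_n}) :
  doubly_stochastic A -> admissible S -> 1 - 2 * phiS A S <= muS A S.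
Proof.
move=> DS /andP[kS k2]; have mC : #|~: S| = (n - #|S|)%N.
  by move: (cardsC S); rewrite card_ord; lia.
have kR : 0 < #|S|%:R :> R by rewrite ltr0n.
have kmR : #|S|%:R <= #|~: S|%:R :> R by rewrite ler_nat mC; lia.
have mS : (0 < #|~: S|)%N by rewrite mC; lia.
have mR : 0 < #|~: S|%:R :> R by rewrite ltr0n.
apply: (le_trans _ (muS_ge_cut DS kS mS)).
rewrite lerD2l lerN2 /phiS -/(block_sum S (~: S)) mulrCA.
apply: ler_wpM2l; first by apply: sumr_ge0 => i _; apply: sumr_ge0 => j _; case: DS.
by rewrite mulr_natl mulr2n lerD2l lef_pV2 ?posrE.
Qed.

Lemma le_muS_mu (S : {set 'I_n}) : admissible S -> muS A S <= mu A.
Proof. exact: le_bigmax_cond. Qed.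

Lemma phi_attained (S0 : {set 'I_n}) :
  admissible S0 -> exists2 S, admissible S & phi A = phiS A S.
Proof.
rewrite /phi => adm0; have [S admS ->] := eq_bigmin S0 _ (phiS A) adm0
  (fun S admS => le_bigmax_cond 0 (phiS A) admS).
by exists S.
Qed.

End CutWeights.

Lemma admissible_set1 (n : nat) (i : 'I_n) : (2 <= n)%N -> admissible [set i].
Proof. by rewrite /admissible cards1 => n2; apply/andP; split=> //; lia. Qed.

Theorem lemma5p42 (R : realFieldType) (n : nat) (A : 'M[R]_n) :
  (2 <= n)%N -> doubly_stochastic A -> irreducible A ->
  mu A >= 1 - 2 * phi A.
Proof.
move=> n2 DS _.
have [S admS ->] := phi_attained A (admissible_set1 (Ordinal n2) n2).
exact: le_trans (muS_ge_one_sub_phiS DS admS) (le_muS_mu A admS).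
Qed.
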